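(* Let $R$ be a commutative noetherian ring, $\mathfrak{a}$ an ideal contained in the Jacobson radical of $R$, and $M$ a finitely generated $R$-module. The maps $f\colon C_{\mathfrak{a}}(M)\to\operatorname{Hom}_R(\widehat{R}^{\mathfrak{a}},M)$, $f(m)(r)=rm$, and $e\colon\operatorname{Hom}_R(\widehat{R}^{\mathfrak{a}},M)\to C_{\mathfrak{a}}(M)$, $e(\varphi)=\varphi(1)$, are well defined and are mutually inverse isomorphisms. In particular, $\operatorname{Hom}_R(\widehat{R}^{\mathfrak{a}},M)$ is a finitely generated $R$-module.
   Context: $\widehat{R}^{\mathfrak{a}}$ is the $\mathfrak{a}$-adic completion of $R$. A module $N$ is $\mathfrak{a}$-adically complete if $N\to\varprojlim_n N/\mathfrak{a}^nN$ is an isomorphism. $C_{\mathfrak{a}}(M)$ denotes the unique maximal $\mathfrak{a}$-adically complete $R$-submodule of $M$ (it exists and is naturally an $\widehat{R}^{\mathfrak{a}}$-module, so $f$ makes sense). *)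

From HB Require Import structures.
From mathcomp Require Import all_boot all_algebra.
Set Implicit Arguments. Unset Strict Implicit. Unset Printing Implicit Defensive.
Import GRing.Theory.
Local Open Scope ring_scope.

Section CommAlg.
Variable R : comNzRingType.

Definition is_ideal (I : R -> Prop) : Prop :=
  [/\ I 0, (forall x y, I x -> I y -> I (x + y)) & (forall r x, I x -> I (r * x))].

Definition ideal_span (s : seq R) (x : R) : Prop :=
  exists c : nat -> R, x = \sum_(i < size s) c i * s`_i.

Definition noetherian : Prop :=
  forall I, is_ideal I ->
    exists s : seq R, forall x, I x <-> ideal_span s x.

Definition maximal_ideal (I : R -> Prop) : Prop :=
  [/\ is_ideal I, ~ I 1 &
      forall J, is_ideal J -> (forall x, I x -> J x) -> ~ J 1 -> forall x, J x -> I x].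

Definition jacobson (x : R) : Prop := forall I, maximal_ideal I -> I x.

Fixpoint idealpow (a : R -> Prop) (n : nat) : R -> Prop :=
  match n with
  | 0 => fun _ => True
  | n'.+1 => fun x => exists s : seq (R * R),
      (forall p, p \in s -> a p.1 /\ idealpow a n' p.2) /\
      x = \sum_(p <- s) p.1 * p.2
  end.

Variable M : lmodType R.

Definition submodule (N : M -> Prop) : Prop :=
  [/\ N 0, (forall x y, N x -> N y -> N (x + y)) & (forall r x, N x -> N (r *: x))].

Definition mod_span (s : seq M) (m : M) : Prop :=
  exists c : nat -> R, m = \sum_(i < size s) c i *: s`_i.

Definition fin_gen_module : Prop := exists s : seq M, forall m, mod_span s m.

Definition powmod (a : R -> Prop) (n : nat) (N : M -> Prop) (m : M) : Prop :=
  exists s : seq (R * M),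
    (forall p, p \in s -> idealpow a n p.1 /\ N p.2) /\
    m = \sum_(p <- s) p.1 *: p.2.

(* N is a-adically complete: the canonical map N -> lim_n N/a^nN is bijective.
   Injectivity: kernel \bigcap_n a^nN is 0.  Surjectivity: every compatible
   system (x_n) (x_(n+1) = x_n mod a^nN) has a limit m (m = x_n mod a^nN). *)
Definition adic_complete (a : R -> Prop) (N : M -> Prop) : Prop :=
  (forall m, N m -> (forall n, powmod a n N m) -> m = 0) /\
  (forall x : nat -> M, (forall n, N (x n)) ->
     (forall n, powmod a n N (x n.+1 - x n)) ->
     exists m, N m /\ forall n, powmod a n N (m - x n)).

(* C_a(M): the maximal a-adically complete submodule, i.e. the union of all
   a-adically complete submodules (by the context this is itself one). *)
Definition Ca (a : R -> Prop) (m : M) : Prop :=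
  exists N, [/\ submodule N, adic_complete a N & N m].

(* Elements of the completion R^a = lim_n R/a^n, represented by compatible
   sequences of representatives; two represent the same element iff ceq. *)
Definition csq (a : R -> Prop) (s : nat -> R) : Prop :=
  forall n, idealpow a n (s n.+1 - s n).

Definition ceq (a : R -> Prop) (s t : nat -> R) : Prop :=
  forall n, idealpow a n (s n - t n).

(* Hom_R(R^a, M): maps on representatives that respect ceq, are additive
   and R-linear (R acting on R^a through R -> R^a). *)
Definition is_hom (a : R -> Prop) (phi : (nat -> R) -> M) : Prop :=
  [/\ (forall s t, csq a s -> csq a t -> ceq a s t -> phi s = phi t),
      (forall s t, csq a s -> csq a t ->
          phi (fun n => s n + t n) = phi s + phi t) &
      (forall r s, csq a s -> phi (fun n => r * s n) = r *: phi s)].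

(* The R^a-module structure on C_a(M): for r in R^a (represented by s) and
   m in C_a(M), x = r m is the a-adic limit in C_a(M) of the s n *: m. *)
Definition cact (a : R -> Prop) (s : nat -> R) (m x : M) : Prop :=
  Ca a x /\ forall n, powmod a n (Ca a) (x - s n *: m).

Definition is_f_of (a : R -> Prop) (m : M) (phi : (nat -> R) -> M) : Prop :=
  forall s, csq a s -> cact a s m (phi s).

Definition one_seq : nat -> R := fun _ => 1.

End CommAlg.

From HB Require Import structures.
From mathcomp Require Import all_boot all_algebra.
From mathcomp Require Import ring.
From Stdlib Require Import Classical IndefiniteDescription FunctionalExtensionality.
Set Implicit Arguments. Unset Strict Implicit. Unset Printing Implicit Defensive.
Import GRing.Theory.
Local Open Scope ring_scope.

(* Krull's intersection theorem ([a] in the Jacobson radical, via a maximal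
   submodule meeting [N := \bigcap_n a^n M] in [a N] and Nakayama) makes a-adic
   limits in [M] unique; this gives well-definedness of [r m] and both identities
   [e o f = id], [f o e = id].  The key point is that for a homomorphism [phi] the
   image [phi(R^a)] is an a-adically complete submodule: if [e] is Cauchy with
   [e_K] in [a^K = (g_i)], then [e] is equivalent to [sum_i g_i u_i + e_K] with
   [u_i] Cauchy, so [phi e] lies in [a^K phi(R^a)]; a Cauchy sequence in the image
   is then the image of a diagonal Cauchy sequence.  Thus [phi 1] lies in
   [C_a(M)], and [e] embeds [Hom_R(R^a, M)] into the noetherian module [M]. *)

Section Submodules.
Variables (R : comNzRingType) (V : lmodType R).
Implicit Types (N : V -> Prop) (s : seq V) (x y : V).

Lemma submodule0 N : submodule N -> N 0.
Proof. by case. Qed.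

Lemma submoduleD N x y : submodule N -> N x -> N y -> N (x + y).
Proof. by case=> _ + _; apply. Qed.

Lemma submoduleZ N r x : submodule N -> N x -> N (r *: x).
Proof. by case=> _ _; apply. Qed.

Lemma submoduleN N x : submodule N -> N x -> N (- x).
Proof. by move=> hN hx; rewrite -scaleN1r; apply: submoduleZ. Qed.

Lemma submoduleB N x y : submodule N -> N x -> N y -> N (x - y).
Proof. by move=> hN hx hy; apply: submoduleD (submoduleN _ _). Qed.

Lemma submodule_sum N (I : Type) (r : seq I) (P : pred I) (F : I -> V) :
  submodule N -> (forall i, P i -> N (F i)) -> N (\sum_(i <- r | P i) F i).
Proof. by case=> N0 ND _ hF; apply: big_ind. Qed.

Fixpoint lspan s x : Prop :=
  if s is g :: s' then exists r y, lspan s' y /\ x = r *: g + y else x = 0.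

Lemma mod_spanE s x : mod_span s x <-> lspan s x.
Proof.
elim: s x => [|g s IH] x /=.
  split; first by case=> c ->; rewrite big_ord0.
  by move=> ->; exists (fun _ => 0); rewrite big_ord0.
split.
  case=> c ->; rewrite big_ord_recl /=.
  exists (c 0%N), (\sum_(i < size s) c (bump 0 i) *: s`_i); split => //.
  by apply/IH; exists (fun i => c i.+1).
case=> r [y [/IH [c ->] ->]].
by exists (fun i => if i is i'.+1 then c i' else r); rewrite big_ord_recl.
Qed.

Lemma lspan_submodule s : submodule (lspan s).
Proof.
elim: s => [|g s IH] /=.
  by split=> [//|x y -> ->|r x ->]; rewrite ?addr0 ?scaler0.
split; first by exists 0, 0; rewrite scale0r addr0; split; first exact: submodule0.
  move=> x y [r1 [y1 [h1 ->]]] [r2 [y2 [h2 ->]]].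
  exists (r1 + r2), (y1 + y2); split; first exact: submoduleD.
  by rewrite scalerDl addrACA.
move=> r x [r1 [y1 [h1 ->]]]; exists (r * r1), (r *: y1).
by split; [exact: submoduleZ | rewrite scalerDr scalerA].
Qed.

Lemma lspan_mem s x : x \in s -> lspan s x.
Proof.
elim: s => [|g s IH] //=; rewrite inE => /orP [/eqP ->|/IH h].
  by exists 1, 0; rewrite scale1r addr0; split; first exact: submodule0 (lspan_submodule s).
by exists 0, x; rewrite scale0r add0r.
Qed.

Lemma lspan_cat s t x :
  lspan (s ++ t) x <-> exists y z, [/\ lspan s y, lspan t z & x = y + z].
Proof.
elim: s x => [|g s IH] x /=.
  by split=> [h|[y [z [-> h ->]]]]; [exists 0, x; rewrite add0r | rewrite add0r].
split.
  case=> r [y [/IH [y1 [z1 [h1 h2 ->]]] ->]].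
  by exists (r *: g + y1), z1; split=> //; [exists r, y1 | rewrite addrA].
case=> y [z [[r [y1 [h1 ->]]] h2 ->]].
by exists r, (y1 + z); split; [apply/IH; exists y1, z | rewrite addrA].
Qed.

Lemma fin_gen_lspan : fin_gen_module V -> exists s, forall x, lspan s x.
Proof. by case=> s hs; exists s => x; apply/mod_spanE. Qed.

End Submodules.

Section Ideals.
Variable R : comNzRingType.
Implicit Types (I a : R -> Prop) (x y r : R).

Lemma ideal0 I : is_ideal I -> I 0.
Proof. by case. Qed.

Lemma idealD I x y : is_ideal I -> I x -> I y -> I (x + y).
Proof. by case=> _ + _; apply. Qed.

Lemma idealMl I r x : is_ideal I -> I x -> I (r * x).
Proof. by case=> _ _; apply. Qed.

Lemma idealMr I r x : is_ideal I -> I x -> I (x * r).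
Proof. by rewrite mulrC; apply: idealMl. Qed.

Lemma idealN I x : is_ideal I -> I x -> I (- x).
Proof. exact: (@submoduleN R R^o). Qed.

Lemma idealB I x y : is_ideal I -> I x -> I y -> I (x - y).
Proof. exact: (@submoduleB R R^o). Qed.

Lemma ideal_sum I (J : Type) (s : seq J) (P : pred J) (F : J -> R) :
  is_ideal I -> (forall i, P i -> I (F i)) -> I (\sum_(i <- s | P i) F i).
Proof. exact: (@submodule_sum R R^o). Qed.

Lemma ideal_spanE s x : ideal_span s x <-> @lspan R R^o s x.
Proof. exact: (@mod_spanE R R^o). Qed.

Lemma idealpow_ideal a n : is_ideal a -> is_ideal (idealpow a n).
Proof.
move=> ha; case: n => [|n] //=; split.
- by exists [::]; rewrite big_nil.
- move=> x y [s1 [h1 ->]] [s2 [h2 ->]]; exists (s1 ++ s2); rewrite big_cat.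
  by split=> // p; rewrite mem_cat => /orP [/h1|/h2].
- move=> r x [s [h ->]]; exists [seq (r * p.1, p.2) | p <- s]; split.
    by move=> _ /mapP [p /h [h1 h2] ->]; split=> //; apply: idealMl.
  by rewrite big_map mulr_sumr; apply: eq_bigr => p _; rewrite mulrA.
Qed.

Lemma idealpowS a n x y : a x -> idealpow a n y -> idealpow a n.+1 (x * y).
Proof. by move=> hx hy; exists [:: (x, y)]; rewrite big_seq1; split=> // p /[1!inE] /eqP->. Qed.

Lemma idealpow_le a n m x : is_ideal a -> (n <= m)%N -> idealpow a m x -> idealpow a n x.
Proof.
move=> ha /subnK <-; elim: (m - n)%N x => [|k IH] x; first by rewrite add0n.
rewrite addSn => -[s [hs ->]]; apply: IH; rewrite big_seq.
have hI := idealpow_ideal (k + n) ha.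
by apply: ideal_sum (hI) _ => p /hs [_ h2]; apply: idealMl hI h2.
Qed.

Lemma idealpow_subset a b n x :
  (forall y, a y -> b y) -> idealpow a n x -> idealpow b n x.
Proof.
move=> hab; elim: n x => [|n IH] x //= [s [h ->]].
by exists s; split=> // p /h [h1 h2]; split; [apply: hab | apply: IH].
Qed.

Lemma idealpow1E a x : is_ideal a -> idealpow a 1 x <-> a x.
Proof.
move=> ha; split=> [[s [h ->]]|hx]; last by rewrite -[x]mulr1; apply: idealpowS.
by rewrite big_seq; apply: ideal_sum => // p /h [h1 _]; apply: idealMr.
Qed.

End Ideals.

Section PowMod.
Variables (R : comNzRingType) (M : lmodType R) (a : R -> Prop).
Hypothesis ha : is_ideal a.
Implicit Types (N : M -> Prop) (x : M).

Lemma powmod_submodule n N : submodule (powmod a n N).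
Proof.
split.
- by exists [::]; rewrite big_nil.
- move=> x y [s1 [h1 ->]] [s2 [h2 ->]]; exists (s1 ++ s2); rewrite big_cat.
  by split=> // p; rewrite mem_cat => /orP [/h1|/h2].
- move=> r x [s [h ->]]; exists [seq (r * p.1, p.2) | p <- s]; split.
    by move=> _ /mapP [p /h [h1 h2] ->]; split=> //; apply: idealMl (idealpow_ideal _ ha) h1.
  by rewrite big_map scaler_sumr; apply: eq_bigr => p _; rewrite scalerA.
Qed.

Lemma powmodZ n N r x : idealpow a n r -> N x -> powmod a n N (r *: x).
Proof. by move=> hr hx; exists [:: (r, x)]; rewrite big_seq1; split=> // p /[1!inE] /eqP->. Qed.

Lemma powmod_subset n N N' x :
  (forall y, N y -> N' y) -> powmod a n N x -> powmod a n N' x.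
Proof. by move=> hN [s [h ->]]; exists s; split=> // p /h [h1 /hN]. Qed.

Lemma powmod_in n N x : submodule N -> powmod a n N x -> N x.
Proof.
move=> hN [s [h ->]]; rewrite big_seq.
by apply: submodule_sum => // p /h [_ ?]; apply: submoduleZ.
Qed.

End PowMod.

Definition ascending_chain_condition (X : Type) (S : (X -> Prop) -> Prop) : Prop :=
  forall C : nat -> X -> Prop, (forall n, S (C n)) -> (forall n x, C n x -> C n.+1 x) ->
    exists n, forall x, C n.+1 x -> C n x.

(* Dependent choice: otherwise iterating a strict enlargement from [A0] gives a
   chain that never stabilizes. *)
Lemma acc_maximal (X : Type) (S : (X -> Prop) -> Prop) A0 :
  ascending_chain_condition S -> S A0 ->
  exists K, S K /\ forall K', S K' -> (forall x, K x -> K' x) -> forall x, K' x -> K x.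
Proof.
move=> acc SA0; apply: NNPP => H.
have step (K : {K | S K}) : exists K' : {K | S K},
    (forall x, sval K x -> sval K' x) /\ exists x, sval K' x /\ ~ sval K x.
  apply: NNPP => H1; apply: H; exists (sval K); split; first exact: svalP.
  move=> K' SK' sub x Kx; apply: NNPP => nK; apply: H1.
  by exists (exist _ K' SK'); split=> //; exists x.
have [f fP] := functional_choice _ step.
pose C n := sval (iter n f (exist _ A0 SA0)).
have [n hn] := acc C (fun n => svalP _) (fun n x h => (fP _).1 x h).
by have [x [h1 h2]] := (fP (iter n f (exist _ A0 SA0))).2; apply/h2/hn.
Qed.

Section NoetherianModule.
Variables (R : comNzRingType) (M : lmodType R).
Hypothesis noeth : noetherian R.
Implicit Types (E : M -> Prop) (l : seq M).

Lemma ideal_lspan I : is_ideal I -> exists rs, forall r, I r <-> @lspan R R^o rs r.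
Proof. by move=> /noeth [rs hrs]; exists rs => r; rewrite hrs ideal_spanE. Qed.

Section Cons.
Variables (E : M -> Prop) (g : M) (l : seq M).
Hypothesis hE : submodule E.

Definition lead_coef_ideal (r : R) : Prop := exists e, E e /\ lspan l (e - r *: g).

Lemma lead_coef_ideal_ideal : is_ideal lead_coef_ideal.
Proof.
have hl := lspan_submodule l; split.
- by exists 0; rewrite scale0r subr0; split; apply: submodule0.
- move=> x y [e1 [h1 k1]] [e2 [h2 k2]]; exists (e1 + e2); split; first exact: submoduleD.
  by rewrite scalerDl opprD addrACA; apply: submoduleD.
- move=> r x [e [h k]]; exists (r *: e); split; first exact: submoduleZ.
  by rewrite -scalerA -scalerBr; apply: submoduleZ.
Qed.

Lemma lift_lead_coefs rs : (forall r, r \in rs -> lead_coef_ideal r) ->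
  exists w, (forall x, lspan w x -> E x) /\
    forall r, @lspan R R^o rs r -> exists e, lspan w e /\ lspan l (e - r *: g).
Proof.
have hl := lspan_submodule l.
elim: rs => [|r1 rs IH] hrs.
  exists [::]; split=> [x /= ->|r /= ->]; first exact: submodule0 hE.
  by exists 0; rewrite scale0r subr0; split=> //; exact: submodule0 hl.
have [w [hwE hw]] := IH (fun r hr => hrs r (@mem_behead _ (r1 :: rs) r hr)).
have [e1 [he1 hl1]] := hrs r1 (mem_head _ _).
exists (e1 :: w); split.
  by move=> x /= [c [x' [hx' ->]]]; exact: submoduleD hE (submoduleZ c hE he1) (hwE _ hx').
move=> r [d [r' [hr' ->]]]; have [e' [he' hl']] := hw r' hr'.
exists (d *: e1 + e'); split; first by exists d, e'.
rewrite scalerDl -scalerA opprD addrACA -scalerBr.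
exact: submoduleD hl (submoduleZ d hl hl1) hl'.
Qed.

End Cons.

Lemma submodule_lspan l E : submodule E -> (forall e, E e -> lspan l e) ->
  exists t, forall e, E e <-> lspan t e.
Proof.
elim: l E => [|g l IH] E hE hEl.
  by exists [::] => e; split=> [/hEl //|/= ->]; exact: submodule0.
have hl := lspan_submodule l.
pose E' e := E e /\ lspan l e.
have hE' : submodule E'.
  split; first by split; apply: submodule0.
    by move=> x y [? ?] [? ?]; split; apply: submoduleD.
  by move=> r x [? ?]; split; apply: submoduleZ.
have [t' ht'] := IH E' hE' (fun e h => h.2).
have [rs hrs] := ideal_lspan (lead_coef_ideal_ideal g l hE).
have [w [hwE hw]] := @lift_lead_coefs E g l hE rs (fun r h => (hrs r).2 (@lspan_mem _ R^o rs r h)).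
exists (w ++ t') => e; split=> [he|/lspan_cat [y [z [hy /ht' [hz _] ->]]]]; last first.
  exact: submoduleD hE (hwE _ hy) hz.
have [r [y [hy he']]] := hEl e he.
have [e2 [he2 hl2]] : exists e2, lspan w e2 /\ lspan l (e2 - r *: g).
  by apply/hw/hrs; exists e; split=> //; rewrite he' addrAC subrr add0r.
apply/lspan_cat; exists e2, (e - e2); split=> //; last by rewrite addrC subrK.
apply/ht'; split; first exact: submoduleB hE he (hwE _ he2).
have -> : e - e2 = y - (e2 - r *: g) by rewrite he' opprB addrCA addrA.
exact: submoduleB hl hy hl2.
Qed.

Lemma fin_gen_submodule E : fin_gen_module M -> submodule E ->
  exists t, forall e, E e <-> lspan t e.
Proof. by move=> /fin_gen_lspan [l hl] hE; apply: submodule_lspan hE (fun e _ => hl e). Qed.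

Lemma fin_gen_ascending_chain_condition :
  fin_gen_module M -> ascending_chain_condition (@submodule R M).
Proof.
move=> fgM C hC hinc.
have mono i j : (i <= j)%N -> forall x, C i x -> C j x.
  move=> /subnK <-; elim: (j - i)%N => [|k IHk] x h; first by rewrite add0n.
  by rewrite addSn; apply/hinc/IHk.
pose U x := exists n, C n x.
have hU : submodule U.
  split; first by exists 0%N; exact: submodule0 (hC 0%N).
    move=> x y [i hi] [j hj]; exists (maxn i j).
    exact: submoduleD (hC _) (mono _ _ (leq_maxl i j) _ hi) (mono _ _ (leq_maxr i j) _ hj).
  by move=> r x [i hi]; exists i; apply: submoduleZ (hC i) hi.
have [t ht] := fin_gen_submodule fgM hU.
have [n hn] : exists n, forall x, lspan t x -> C n x.
  have : forall x, x \in t -> U x by move=> x /lspan_mem /ht.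
  elim: t {ht} => [|g t IHt] ht.
    by exists 0%N => x /= ->; exact: submodule0 (hC 0%N).
  have [n1 hn1] := ht g (mem_head _ _).
  have [n2 hn2] := IHt (fun x hx => ht x (@mem_behead _ (g :: t) x hx)).
  exists (maxn n1 n2) => x /= [r [y [hy ->]]].
  apply: submoduleD (hC _) (submoduleZ r (hC _) (mono _ _ (leq_maxl _ _) _ hn1)) _.
  exact: mono _ _ (leq_maxr _ _) _ (hn2 _ hy).
by exists n => x hx; apply/hn/ht; exists n.+1.
Qed.

End NoetherianModule.

Section Nakayama.
Variable R : comNzRingType.
Hypothesis noeth : noetherian R.

Lemma fin_gen_regular : @fin_gen_module R R^o.
Proof.
exists [:: (1 : R^o)] => m; apply/mod_spanE; exists m, 0; split=> //.
by rewrite addr0 /GRing.scale /= mulr1.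
Qed.

(* If [1 - x] were not a unit, a maximal ideal containing [1 - x] would miss [x]. *)
Lemma jacobson_unit_subr (x : R) : jacobson x -> exists u, u * (1 - x) = 1.
Proof.
move=> hx; pose I r := exists u, r = u * (1 - x).
have hI : is_ideal I.
  split; first by exists 0; rewrite mul0r.
    by move=> y z [u ->] [v ->]; exists (u + v); rewrite mulrDl.
  by move=> r y [u ->]; exists (r * u); rewrite mulrA.
case: (classic (I 1)) => [[u hu]|nI1]; first by exists u.
pose S J := [/\ is_ideal J, forall y, I y -> J y & ~ J 1].
have accS : ascending_chain_condition S.
  move=> C hC; apply: (fin_gen_ascending_chain_condition noeth fin_gen_regular).
  by move=> n; case: (hC n).
have [K [[hK hIK nK1] hmax]] := @acc_maximal _ S I accS (And3 hI (fun y h => h) nI1).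
have mK : maximal_ideal K.
  split=> // J hJ hKJ nJ1; apply: hmax => //.
  by split=> // y /hIK /hKJ.
apply: False_ind (nK1 _); rewrite -(subrK x 1) addrC.
by apply: idealD hK (hx _ mK) (hIK _ _); exists 1; rewrite mul1r.
Qed.

Variables (M : lmodType R) (a : R -> Prop).
Hypothesis ha : is_ideal a.
Hypothesis hjac : forall x, a x -> jacobson x.

Lemma powmod1_lspan_cons (N : M -> Prop) g t : (forall e, N e <-> lspan (g :: t) e) ->
  forall x, powmod a 1 N x -> exists c y, [/\ a c, lspan t y & x = c *: g + y].
Proof.
move=> hN x [s [hs ->]]; have ht := lspan_submodule t.
elim: s hs => [|p s IHs] hs.
  exists 0, 0; rewrite big_nil scale0r addr0.
  by split=> //; [exact: ideal0 | exact: submodule0 ht].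
rewrite big_cons.
have [c [y [hc hy ->]]] := IHs (fun q hq => hs q (@mem_behead _ (p :: s) q hq)).
have [/(idealpow1E _ ha) hp1 /hN [q [z [hz ->]]]] := hs p (mem_head _ _).
exists (p.1 * q + c), (p.1 *: z + y); split.
- exact: idealD ha (idealMr _ ha hp1) hc.
- exact: submoduleD ht (submoduleZ _ ht hz) hy.
- by rewrite scalerDr scalerA addrACA -scalerDl.
Qed.

Lemma nakayama (N : M -> Prop) t : submodule N -> (forall e, N e <-> lspan t e) ->
  (forall e, N e -> powmod a 1 N e) -> forall e, N e -> e = 0.
Proof.
elim: t N => [|g t IH] N hN hNt hpow e; first by move/hNt.
have hg : N g by apply/hNt/lspan_mem/mem_head.
have [c [y [hc hy gE]]] := powmod1_lspan_cons hNt (hpow g hg).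
have [u hu] := jacobson_unit_subr (hjac hc).
have ht := lspan_submodule t.
have hgt : lspan t g.
  have -> : g = u *: y.
    by rewrite -[y](addKr (c *: g)) -gE addrC -[X in X - _]scale1r -scalerBl scalerA hu scale1r.
  exact: submoduleZ ht hy.
apply: (IH N hN) => // e'; split.
  by move/hNt => [r [z [hz ->]]]; apply: submoduleD ht (submoduleZ _ ht hgt) hz.
by move=> h; apply/hNt; exists 0, e'; rewrite scale0r add0r.
Qed.

End Nakayama.

Section PowerOfSpan.
Variable R : comNzRingType.
Local Notation span := (@lspan R R^o).

(* Elements of [(b + gR)^n], expanded as [sum_k b^k g^(n-k)]. *)
Definition binomial_span (b : R -> Prop) (g : R) (n : nat) (x : R) : Prop :=
  exists l : seq (nat * R),
    (forall p, p \in l -> (p.1 <= n)%N /\ idealpow b p.1 p.2) /\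
    x = \sum_(p <- l) p.2 * g ^+ (n - p.1).

Lemma idealpow_span_cons gs g n x :
  idealpow (span (g :: gs)) n x -> binomial_span (span gs) g n x.
Proof.
have hb : is_ideal (span gs) := lspan_submodule gs.
elim: n x => [|n IH] x.
  move=> _; exists [:: (0%N, x)]; rewrite big_seq1 subnn expr0 mulr1.
  by split=> // p /[1!inE] /eqP ->.
case=> s [hs ->]; elim: s hs => [|q s IHs] hs; first by exists [::]; rewrite !big_nil.
rewrite big_cons.
have [l1 [hl1 ->]] := IHs (fun p hp => hs p (@mem_behead _ (q :: s) p hp)).
have [[r [y0 [hy0 ->]]] /IH [l2 [hl2 ->]]] := hs q (mem_head _ _).
exists ([seq (p.1, r * p.2) | p <- l2] ++ [seq (p.1.+1, y0 * p.2) | p <- l2] ++ l1).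
split.
  move=> p; rewrite !mem_cat => /or3P [] /=.
  - case/mapP => p' /hl2 [h1 h2] -> /=; split; first exact: leqW.
    exact: idealMl (idealpow_ideal _ hb) h2.
  - by case/mapP => p' /hl2 [h1 h2] -> /=; split=> //; apply: idealpowS.
  - by move/hl1 => [h1 h2]; split=> //; apply: leqW.
rewrite !big_cat /= !big_map addrA; congr (_ + _).
rewrite /GRing.scale /= mulrDl !mulr_sumr -!big_split /= !big_seq.
by apply: eq_bigr => p /hl2 [h1 _]; rewrite subSS subSn // exprS; ring.
Qed.

Lemma binomial_span_sub (b Q : R -> Prop) g m j x : is_ideal b -> is_ideal Q ->
  (forall y, idealpow b m y -> Q y) -> Q (g ^+ j) -> binomial_span b g (m + j) x -> Q x.
Proof.
move=> hb hQ hm hg [l [hl ->]]; rewrite big_seq; apply: ideal_sum => // p /hl [h1 h2].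
case: (leqP m p.1) => hmp; first by apply: idealMr => //; apply/hm/(idealpow_le hb hmp).
by rewrite -addnBAC ?(ltnW hmp) // exprD mulrA; apply: idealMl.
Qed.

Lemma idealpow_span_sub (Q : R -> Prop) gs : is_ideal Q ->
  (forall g, g \in gs -> exists j, Q (g ^+ j)) ->
  exists n, forall x, idealpow (span gs) n x -> Q x.
Proof.
move=> hQ; elim: gs => [|g gs IH] h.
  by exists 1%N => x /(idealpow1E _ (lspan_submodule [::])) /= ->; apply: ideal0.
have [m hm] := IH (fun g' hg' => h g' (@mem_behead _ (g :: gs) g' hg')).
have [j hj] := h g (mem_head _ _).
exists (m + j)%N => x /idealpow_span_cons.
exact: binomial_span_sub (lspan_submodule (gs : seq R^o)) hQ hm hj.
Qed.

End PowerOfSpan.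

Section KrullIntersection.
Variables (R : comNzRingType) (M : lmodType R) (a : R -> Prop).
Hypothesis noeth : noetherian R.
Hypothesis ha : is_ideal a.
Hypothesis fgM : fin_gen_module M.
Local Notation T := (fun _ : M => True).

Definition meets_in_powmod1 (N K : M -> Prop) : Prop :=
  submodule K /\ forall y, K y /\ N y <-> powmod a 1 N y.

Section MaximalMeet.
Variables (N K : M -> Prop).
Hypothesis hK : meets_in_powmod1 N K.
Hypothesis Kmax : forall K', meets_in_powmod1 N K' -> (forall x, K x -> K' x) ->
  forall x, K' x -> K x.

(* With [j] chosen where the chain [(K : g^j)] stabilizes, [g^j M + K] still
   meets [N] in [a N], so maximality forces [g^j M <= K]. *)
Lemma maximal_meet_power g : a g -> exists j, forall m, K (g ^+ j *: m).
Proof.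
case: hK => subK hKN ag.
pose C j m := K (g ^+ j *: m).
have hC j : submodule (C j).
  split; first by rewrite /C scaler0; exact: submodule0 subK.
    by move=> y z hy hz; rewrite /C scalerDr; apply: submoduleD.
  by move=> r y hy; rewrite /C scalerA mulrC -scalerA; apply: submoduleZ.
have hCS j m : C j m -> C j.+1 m.
  by rewrite /C exprS -scalerA; apply: submoduleZ.
have [j hj] := fin_gen_ascending_chain_condition noeth fgM hC hCS.
exists j; pose K' y := exists m k, K k /\ y = g ^+ j *: m + k.
have hK' : submodule K'.
  split; first by exists 0, 0; rewrite scaler0 addr0; split=> //; exact: submodule0 subK.
    move=> y z [m1 [k1 [h1 ->]]] [m2 [k2 [h2 ->]]]; exists (m1 + m2), (k1 + k2).
    by split; [exact: submoduleD | rewrite scalerDr addrACA].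
  move=> r y [m1 [k1 [h1 ->]]]; exists (r *: m1), (r *: k1).
  by split; [exact: submoduleZ | rewrite scalerDr !scalerA mulrC].
have meetK' : meets_in_powmod1 N K'.
  split=> // y; split; last first.
    by case/hKN => hKy hNy; split=> //; exists 0, y; rewrite scaler0 add0r.
  case=> [[m [k [hk hy]]] hNy]; apply/hKN; split=> //.
  have Kgy : K (g *: y) by case/hKN: (powmodZ (proj2 (idealpow1E _ ha) ag) hNy).
  have : C j.+1 m.
    have -> : C j.+1 m = K (g *: y - g *: k) by rewrite /C hy scalerDr exprS scalerA addrK.
    exact: submoduleB subK Kgy (submoduleZ g subK hk).
  by move/hj => hjm; rewrite hy; exact: submoduleD subK hjm hk.
move=> m; apply: Kmax meetK' _ _ _; first by move=> y hy; exists 0, y; rewrite scaler0 add0r.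
by exists m, 0; split; [exact: submodule0 subK | rewrite addr0].
Qed.

Lemma maximal_meet_contains_powmod :
  exists n, forall x, powmod a n T x -> K x.
Proof.
have [gs hgs] := ideal_lspan noeth ha.
pose Q r := forall m, K (r *: m).
have subK := hK.1.
have hQ : is_ideal Q.
  split; first by move=> m; rewrite scale0r; exact: submodule0 subK.
    by move=> y z hy hz m; rewrite scalerDl; apply: submoduleD.
  by move=> r y hy m; rewrite -scalerA; exact: submoduleZ subK (hy m).
have [n hn] : exists n, forall r, idealpow (@lspan R R^o gs) n r -> Q r.
  apply: idealpow_span_sub hQ _ => g hg.
  exact/maximal_meet_power/hgs/(@lspan_mem _ R^o gs g hg).
exists n => _ [s [hs ->]]; rewrite big_seq; apply: submodule_sum subK _ => p /hs [hp _].
by apply/hn/(idealpow_subset _ hp) => y /hgs.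
Qed.

End MaximalMeet.

Hypothesis hjac : forall x, a x -> jacobson x.

Theorem krull_intersection (x : M) : (forall n, powmod a n T x) -> x = 0.
Proof.
pose N y := forall n, powmod a n T y.
have hN : submodule N.
  split; first by move=> n; exact: submodule0 (powmod_submodule _ _ _).
    by move=> y z hy hz n; apply: submoduleD (powmod_submodule _ _ _) (hy n) (hz n).
  by move=> r y hy n; apply: submoduleZ (powmod_submodule _ _ _) (hy n).
have meet_aN : meets_in_powmod1 N (powmod a 1 N).
  split; first exact: powmod_submodule.
  by move=> y; split=> [[]//|h]; split=> //; apply: powmod_in hN h.
have accS : ascending_chain_condition (meets_in_powmod1 N).
  by move=> C hC; apply: (fin_gen_ascending_chain_condition noeth fgM) => n; case: (hC n).
have [K [hK Kmax]] := acc_maximal accS meet_aN.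
have [n hn] := maximal_meet_contains_powmod hK Kmax.
have [t ht] := fin_gen_submodule noeth fgM hN.
apply: (nakayama noeth ha hjac hN ht) => e he.
by apply/hK.2; split=> //; apply/hn/he.
Qed.

End KrullIntersection.

Section CauchySequences.
Variables (R : comNzRingType) (a : R -> Prop).
Hypothesis ha : is_ideal a.
Implicit Types (s t : nat -> R).

Lemma csq_le t n m : csq a t -> (n <= m)%N -> idealpow a n (t m - t n).
Proof.
move=> ht /subnK <-; have hI := idealpow_ideal n ha.
elim: (m - n)%N => [|k IH]; first by rewrite add0n subrr; apply: ideal0.
rewrite addSn -[t _](subrK (t (k + n)%N)) -addrA.
exact: idealD hI (idealpow_le ha (leq_addl k n) (ht _)) IH.
Qed.

Lemma csqC c : csq a (fun _ => c).
Proof. by move=> n; rewrite subrr; exact: ideal0 (idealpow_ideal n ha). Qed.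

Lemma csqD s t : csq a s -> csq a t -> csq a (fun n => s n + t n).
Proof.
by move=> hs ht n; rewrite opprD addrACA; exact: idealD (idealpow_ideal n ha) (hs n) (ht n).
Qed.

Lemma csqB s t : csq a s -> csq a t -> csq a (fun n => s n - t n).
Proof.
move=> hs ht n; have -> : s n.+1 - t n.+1 - (s n - t n) = (s n.+1 - s n) - (t n.+1 - t n).
  by ring.
exact: idealB (idealpow_ideal n ha) (hs n) (ht n).
Qed.

Lemma csqZ r s : csq a s -> csq a (fun n => r * s n).
Proof. by move=> hs n; rewrite -mulrBr; exact: idealMl (idealpow_ideal n ha) (hs n). Qed.

Lemma csq_sum k (w : nat -> nat -> R) : (forall i, csq a (w i)) ->
  csq a (fun n => \sum_(i < k) w i n).
Proof.
by move=> hw n; rewrite -sumrB; apply: ideal_sum (idealpow_ideal n ha) _ => i _; apply: hw.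
Qed.

Section Expansion.
Variables (K : nat) (gs : seq R).
Hypothesis hgs : forall x, idealpow a K x <-> ideal_span gs x.

Lemma idealpow_expand m x : idealpow a (m + K) x ->
  exists c : nat -> R, (forall i, idealpow a m (c i)) /\ x = \sum_(i < size gs) c i * gs`_i.
Proof.
elim: m x => [|m IH] x; first by rewrite add0n => /hgs [c ->]; exists c.
rewrite addSn => -[s [hs ->]]; elim: s hs => [|p s IHs] hs.
  exists (fun _ => 0); rewrite big_nil; split; first by move=> i; exact: ideal0 (idealpow_ideal m.+1 ha).
  by rewrite big1 // => i _; rewrite mul0r.
rewrite big_cons.
have [c1 [hc1 ->]] := IHs (fun q hq => hs q (@mem_behead _ (p :: s) q hq)).
have [hp1 /IH [c2 [hc2 ->]]] := hs p (mem_head _ _).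
exists (fun i => p.1 * c2 i + c1 i); split.
  by move=> i; apply: idealD (idealpow_ideal _ ha) (idealpowS _ _) (hc1 i).
by rewrite mulr_sumr -big_split; apply: eq_bigr => i _; rewrite mulrDl mulrA.
Qed.

(* Telescoping the expansions of the increments [t (k + K).+1 - t (k + K)]. *)
Lemma csq_expand t : csq a t -> exists u : nat -> nat -> R, (forall i, csq a (u i)) /\
  forall n, \sum_(i < size gs) u i n * gs`_i = t (n + K)%N - t K.
Proof.
move=> ht.
have [f hf] := functional_choice _ (fun k => idealpow_expand (ht (k + K)%N)).
exists (fun i n => \sum_(k < n) f k i); split.
  by move=> i n /=; rewrite big_ord_recr /= addrAC subrr add0r; exact: (hf n).1.
elim=> [|n IH]; first by rewrite add0n subrr big1 // => i _; rewrite big_ord0 mul0r.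
under eq_bigr do rewrite big_ord_recr /= mulrDl.
by rewrite big_split /= IH -(hf n).2 addSn addrC addrA subrK.
Qed.

End Expansion.
End CauchySequences.

Section Homomorphisms.
Variables (R : comNzRingType) (M : lmodType R) (a : R -> Prop).
Hypothesis ha : is_ideal a.
Implicit Types (phi psi : (nat -> R) -> M) (s t : nat -> R).

Lemma csq_one : csq a (one_seq R).
Proof. exact: (csqC ha). Qed.

Lemma is_hom0 : is_hom a (fun _ => 0 : M).
Proof. by split=> *; rewrite ?addr0 ?scaler0. Qed.

Lemma is_homD phi psi : is_hom a phi -> is_hom a psi -> is_hom a (fun s => phi s + psi s).
Proof.
move=> [h1 h2 h3] [k1 k2 k3]; split=> [s t hs ht hst|s t hs ht|r s hs].
- by rewrite (h1 s t) // (k1 s t).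
- by rewrite h2 // k2 // addrACA.
- by rewrite h3 // k3 // scalerDr.
Qed.

Lemma is_homZ r phi : is_hom a phi -> is_hom a (fun s => r *: phi s).
Proof.
move=> [h1 h2 h3]; split=> [s t hs ht hst|s t hs ht|r' s hs].
- by rewrite (h1 s t).
- by rewrite h2 // scalerDr.
- by rewrite h3 // !scalerA mulrC.
Qed.

Lemma is_hom_sum k (c : nat -> R) (ps : nat -> (nat -> R) -> M) :
  (forall i, (i < k)%N -> is_hom a (ps i)) -> is_hom a (fun s => \sum_(i < k) c i *: ps i s).
Proof.
move=> hps; elim: k hps => [|k IH] hps.
  by apply: eq_ind is_hom0 _ _; apply: functional_extensionality => s; rewrite big_ord0.
have -> : (fun s => \sum_(i < k.+1) c i *: ps i s) =
          (fun s => \sum_(i < k) c i *: ps i s + c k *: ps k s).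
  by apply: functional_extensionality => s; rewrite big_ord_recr.
exact: is_homD (IH (fun i hi => hps i (ltnW hi))) (is_homZ _ (hps k (ltnSn k))).
Qed.

Section Hom.
Variable phi : (nat -> R) -> M.
Hypothesis hphi : is_hom a phi.

Lemma hom_ext s t : (forall n, s n = t n) -> phi s = phi t.
Proof. by move=> h; congr phi; apply: functional_extensionality. Qed.

Lemma homE s t : csq a s -> csq a t -> ceq a s t -> phi s = phi t.
Proof. by case: hphi => + _ _; apply. Qed.

Lemma homD s t : csq a s -> csq a t -> phi (fun n => s n + t n) = phi s + phi t.
Proof. by case: hphi => _ + _; apply. Qed.

Lemma homZ r s : csq a s -> phi (fun n => r * s n) = r *: phi s.
Proof. by case: hphi => _ _; apply. Qed.

Lemma homC c : phi (fun _ => c) = c *: phi (one_seq R).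
Proof. by rewrite -homZ; [apply: hom_ext => n; rewrite mulr1 | exact: csq_one]. Qed.

Lemma hom0 : phi (fun _ => 0) = 0.
Proof. by rewrite homC scale0r. Qed.

Lemma homB s t : csq a s -> csq a t -> phi (fun n => s n - t n) = phi s - phi t.
Proof.
move=> hs ht; have := homD (csqB ha hs ht) ht.
by rewrite (@hom_ext _ s) => [->|n]; rewrite ?addrK ?subrK.
Qed.

Lemma hom_sum k (w : nat -> nat -> R) : (forall i, csq a (w i)) ->
  phi (fun n => \sum_(i < k) w i n) = \sum_(i < k) phi (w i).
Proof.
move=> hw; elim: k => [|k IH].
  by rewrite big_ord0 -hom0; apply: hom_ext => n; rewrite big_ord0.
rewrite big_ord_recr /= -IH -homD; last exact: hw; last exact: csq_sum.
by apply: hom_ext => n; rewrite big_ord_recr.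
Qed.

Definition hom_image (x : M) : Prop := exists2 s, csq a s & x = phi s.

Lemma hom_image_submodule : submodule hom_image.
Proof.
split; first by exists (fun _ => 0); [exact: csqC | rewrite hom0].
  by move=> _ _ [s hs ->] [t ht ->]; exists (fun n => s n + t n); [exact: csqD | rewrite homD].
by move=> r _ [s hs ->]; exists (fun n => r * s n); [exact: csqZ | rewrite homZ].
Qed.

Lemma hom_image_one : hom_image (phi (one_seq R)).
Proof. by exists (one_seq R); first exact: csq_one. Qed.

Hypothesis noeth : noetherian R.

(* Since [e K] lies in [a^K = (gs)], [e] agrees with the shifted sequence
   [sum_i gs_i (u_i n) + e K], whose image is visibly in [a^K image]. *)
Lemma hom_image_powmod K e : csq a e -> idealpow a K (e K) -> powmod a K hom_image (phi e).
Proof.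
move=> he heK.
have [gs hgs] := noeth (idealpow_ideal K ha).
have [u [hu hue]] := csq_expand ha hgs he.
pose v n := \sum_(i < size gs) gs`_i * u i n + e K * one_seq R n.
have hv n : v n = e (n + K)%N.
  by rewrite /v /one_seq mulr1; under eq_bigr do rewrite mulrC; rewrite hue subrK.
have csqv : csq a v by move=> n; rewrite !hv addSn; apply: idealpow_le ha (leq_addr K n) (he _).
have -> : phi e = phi v.
  apply: homE => // n; rewrite hv -opprB; apply: idealN (idealpow_ideal n ha) _.
  exact: (csq_le ha he (leq_addr K n)).
have csqw i : csq a (fun n => gs`_i * u i n) by apply: csqZ.
have hsub := powmod_submodule ha K hom_image.
rewrite /v homD ?(hom_sum _ csqw) ?homZ; [|exact: csq_one|exact: csq_sum csqw|exact: csqZ csq_one].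
apply: submoduleD hsub (submodule_sum _ hsub _) (powmodZ heK hom_image_one) => i _.
rewrite homZ //; apply: powmodZ; first by apply/hgs/ideal_spanE/lspan_mem/mem_nth.
by exists (u i).
Qed.

Lemma powmod_hom_image n y : powmod a n hom_image y ->
  exists d, [/\ csq a d, forall k, idealpow a n (d k) & y = phi d].
Proof.
have hI := idealpow_ideal n ha.
case=> s [hs ->]; elim: s hs => [|p s IH] hs.
  exists (fun _ => 0); split; [exact: csqC | by move=> k; apply: ideal0 | by rewrite big_nil hom0].
rewrite big_cons.
have [d [hd hdk ->]] := IH (fun q hq => hs q (@mem_behead _ (p :: s) q hq)).
have [hp1 [t ht ->]] := hs p (mem_head _ _).
exists (fun k => p.1 * t k + d k); split.
- exact: (csqD ha (csqZ ha _ ht) hd).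
- by move=> k; apply: (idealD hI (idealMr _ hI hp1) (hdk k)).
- by rewrite homD ?homZ //; exact: (csqZ ha _ ht).
Qed.

Hypothesis hjac : forall x, a x -> jacobson x.
Hypothesis fgM : fin_gen_module M.

(* Writing [x (k + 1) - x k = phi (d k)] with [d k] in [a^k], the limit is [phi] of
   the diagonal sequence [s0 n + sum_(k < n) d k n]. *)
Lemma hom_image_complete : adic_complete a hom_image.
Proof.
split=> [m _ hm|x hx hstep].
  by apply: (krull_intersection noeth ha fgM hjac) => n; apply: powmod_subset (hm n).
have [s0 hs0 hx0] := hx 0%N.
have [d hd] := functional_choice _ (fun k => powmod_hom_image (hstep k)).
have csqd k : csq a (d k) by case: (hd k).
pose w K n := s0 n + \sum_(k < K) d k n.
have csqw K : csq a (w K) := csqD ha hs0 (csq_sum ha K csqd).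
have phiw K : phi (w K) = x K.
  elim: K => [|K IH]; first by rewrite hx0; apply: hom_ext => n; rewrite /w big_ord0 addr0.
  rewrite (@hom_ext _ (fun n => w K n + d K n)); last by move=> n; rewrite /w big_ord_recr addrA.
  by rewrite homD // IH; case: (hd K) => _ _ <-; rewrite addrC subrK.
pose s n := w n n.
have csqs : csq a s.
  move=> n; have hI := idealpow_ideal n ha.
  have -> : s n.+1 - s n = (s0 n.+1 - s0 n) + (\sum_(k < n) (d k n.+1 - d k n) + d n n.+1).
    by rewrite /s /w big_ord_recr /= sumrB; ring.
  have [_ hdn _] := hd n.
  exact: (idealD hI (hs0 n) (idealD hI (ideal_sum _ hI (fun (k : 'I_n) _ => csqd k n)) (hdn n.+1))).
exists (phi s); split=> [|K]; first by exists s.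
rewrite -phiw -homB //; apply: hom_image_powmod; first exact: (csqB ha csqs (csqw K)).
by rewrite /s subrr; apply: ideal0 (idealpow_ideal K ha).
Qed.

End Hom.
End Homomorphisms.

Section AdicLimits.
Variables (R : comNzRingType) (M : lmodType R) (a : R -> Prop).
Hypothesis noeth : noetherian R.
Hypothesis ha : is_ideal a.
Hypothesis hjac : forall x, a x -> jacobson x.
Hypothesis fgM : fin_gen_module M.
Implicit Types (phi psi : (nat -> R) -> M) (s t : nat -> R) (m x y : M).

Definition adic_limit s m x : Prop :=
  forall n, powmod a n (fun _ => True) (x - s n *: m).

Lemma adic_limit_unique s m x y : adic_limit s m x -> adic_limit s m y -> x = y.
Proof.
move=> hx hy; apply/eqP; rewrite -subr_eq0; apply/eqP.
apply: (krull_intersection noeth ha fgM hjac) => n.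
have -> : x - y = (x - s n *: m) - (y - s n *: m) by rewrite opprB addrA subrK.
exact: submoduleB (powmod_submodule ha n _) (hx n) (hy n).
Qed.

Lemma cact_adic_limit s m x : cact a s m x -> adic_limit s m x.
Proof. by case=> _ h n; apply: powmod_subset (h n). Qed.

Lemma Ca_adic_complete N x : submodule N -> adic_complete a N -> N x -> Ca a x.
Proof. by exists N. Qed.

Lemma Ca_hom_image phi x : is_hom a phi -> hom_image a phi x -> Ca a x.
Proof.
move=> hphi; apply: Ca_adic_complete (hom_image_submodule ha hphi) _.
exact: hom_image_complete.
Qed.

Lemma Ca_hom_one phi : is_hom a phi -> Ca a (phi (one_seq R)).
Proof. by move=> hphi; apply: Ca_hom_image hphi (hom_image_one ha phi). Qed.

Lemma hom_is_f_of phi : is_hom a phi -> is_f_of a (phi (one_seq R)) phi.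
Proof.
move=> hphi s hs; split=> [|n]; first by apply: Ca_hom_image hphi _; exists s.
have -> : phi s - s n *: phi (one_seq R) = phi (fun k => s k - s n).
  by rewrite (homB ha hphi hs (csqC ha (s n))) (homC ha hphi).
apply: powmod_subset (fun y => Ca_hom_image hphi) _.
apply: (hom_image_powmod ha hphi noeth (csqB ha hs (csqC ha (s n)))).
by rewrite subrr; apply: ideal0 (idealpow_ideal n ha).
Qed.

Lemma is_f_of_one m phi : is_f_of a m phi -> phi (one_seq R) = m.
Proof.
move=> hf; apply: (adic_limit_unique (s := one_seq R) (m := m)).
  exact/cact_adic_limit/hf/csq_one.
by move=> n; rewrite /one_seq scale1r subrr; apply: submodule0 (powmod_submodule ha n _).
Qed.

Lemma adic_limit_is_hom m phi : (forall s, csq a s -> adic_limit s m (phi s)) -> is_hom a phi.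
Proof.
move=> hlim; have hsub n := powmod_submodule ha n (fun _ : M => True).
split=> [s t hs ht hst|s t hs ht|r s hs].
- apply: adic_limit_unique (hlim t ht) => n.
  have -> : phi s - t n *: m = (phi s - s n *: m) + (s n - t n) *: m.
    by rewrite scalerBl addrA subrK.
  exact: submoduleD (hsub n) (hlim s hs n) (powmodZ (hst n) I).
- apply: (adic_limit_unique (hlim _ (csqD ha hs ht))) => n.
  rewrite scalerDl opprD addrACA.
  exact: submoduleD (hsub n) (hlim s hs n) (hlim t ht n).
- apply: (adic_limit_unique (hlim _ (csqZ ha r hs))) => n.
  by rewrite -scalerA -scalerBr; apply: submoduleZ (hsub n) (hlim s hs n).
Qed.

Lemma Ca_is_f_of m : Ca a m -> exists phi, is_hom a phi /\ is_f_of a m phi.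
Proof.
case=> N [hN hNc hm].
have limN s : exists L, csq a s -> N L /\ forall n, powmod a n N (L - s n *: m).
  case: (classic (csq a s)) => hs; last by exists 0.
  have [L hL] : exists L, N L /\ forall n, powmod a n N (L - s n *: m).
    apply: hNc.2 => n; first exact: submoduleZ hN hm.
    by rewrite -scalerBl; apply: powmodZ (hs n) hm.
  by exists L.
have [phi hphi] := functional_choice _ limN.
have NCa y : N y -> Ca a y := Ca_adic_complete hN hNc.
exists phi; split.
  apply: (adic_limit_is_hom (m := m)) => s hs n.
  exact: powmod_subset (proj2 (hphi s hs) n).
move=> s hs; have [hNs hlim] := hphi s hs.
by split=> [|n]; [exact: NCa | exact: powmod_subset NCa (hlim n)].
Qed.

Lemma hom_eq_of_one phi psi : is_hom a phi -> is_hom a psi ->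
  phi (one_seq R) = psi (one_seq R) -> forall s, csq a s -> phi s = psi s.
Proof.
move=> hphi hpsi h1 s hs; apply: (adic_limit_unique (s := s) (m := psi (one_seq R))).
  by rewrite -h1; apply/cact_adic_limit/hom_is_f_of.
exact/cact_adic_limit/hom_is_f_of.
Qed.

Lemma hom_fin_gen : exists (k : nat) (ps : nat -> (nat -> R) -> M),
  (forall i, (i < k)%N -> is_hom a (ps i)) /\
  forall phi, is_hom a phi -> exists c : nat -> R, forall s, csq a s ->
    phi s = \sum_(i < k) c i *: ps i s.
Proof.
pose E x := exists phi, is_hom a phi /\ x = phi (one_seq R).
have hE : submodule E.
  split; first by exists (fun _ => 0); split; [exact: is_hom0 | done].
    by move=> _ _ [p [hp ->]] [q [hq ->]]; exists (fun s => p s + q s); split; [exact: is_homD|].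
  by move=> r _ [p [hp ->]]; exists (fun s => r *: p s); split; [exact: is_homZ|].
have [t ht] := fin_gen_submodule noeth fgM hE.
have lift i : exists p, is_hom a p /\ ((i < size t)%N -> t`_i = p (one_seq R)).
  case: (ltnP i (size t)) => hi; last by exists (fun _ => 0); split=> //; exact: is_hom0.
  have [p [hp ->]] : E t`_i by apply/ht/lspan_mem/mem_nth.
  by exists p.
have [ps hps] := functional_choice _ lift.
exists (size t), ps; split=> [i _|phi hphi]; first by case: (hps i).
have [c hc] : mod_span t (phi (one_seq R)) by apply/mod_spanE/ht; exists phi.
exists c; apply: hom_eq_of_one hphi (is_hom_sum c (fun i _ => (hps i).1)) _.
by rewrite hc; apply: eq_bigr => i _; rewrite -(hps i).2.
Qed.

End AdicLimits.

Theorem proposition2p5 (R : comNzRingType) (a : R -> Prop) (M : lmodType R) :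
  noetherian R -> is_ideal a -> (forall x, a x -> jacobson x) ->
  fin_gen_module M ->
  (* r m is well defined on C_a(M) (uniqueness of the limit) *)
      (forall s (m x y : M), csq a s -> Ca a m ->
          cact a s m x -> cact a s m y -> x = y) /\
      (* f is well defined: f(m) exists and lies in Hom_R(R^a, M) *)
      (forall m : M, Ca a m ->
          exists phi, is_hom a phi /\ is_f_of a m phi) /\
      (* e is well defined: phi(1) lies in C_a(M) *)
      (forall phi : (nat -> R) -> M, is_hom a phi -> Ca a (phi (one_seq R))) /\
      (* e o f = id *)
      (forall (m : M) phi, Ca a m -> is_hom a phi -> is_f_of a m phi ->
          phi (one_seq R) = m) /\
      (* f o e = id *)
      (forall phi : (nat -> R) -> M, is_hom a phi ->
          is_f_of a (phi (one_seq R)) phi) /\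
      (* Hom_R(R^a, M) is a finitely generated R-module *)
      (exists (k : nat) (ps : nat -> (nat -> R) -> M),
          (forall i, (i < k)%N -> is_hom a (ps i)) /\
          forall phi, is_hom a phi ->
            exists c : nat -> R, forall s, csq a s ->
              phi s = \sum_(i < k) c i *: ps i s).
Proof.
move=> noeth ha hjac fgM; split.
  move=> s m x y _ _ /cact_adic_limit hx /cact_adic_limit hy.
  exact: (adic_limit_unique noeth ha hjac fgM hx hy).
split; first exact: Ca_is_f_of.
split; first by move=> phi; apply: Ca_hom_one.
split; first by move=> m phi _ _; apply: is_f_of_one.
split; first by move=> phi; apply: hom_is_f_of.
exact: hom_fin_gen.
Qed.
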